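(* Let $t \geq 1$ be an integer and let $\{(A_i, B_i) : i \in I\}$ be a finite collection of pairs of finite sets (indexed by a finite set $I$) such that: (a) $|A_i \cap B_i| \leq t$ for each $i \in I$; (b) $|A_i \cap B_j| \geq t$ for all $i, j \in I$ with $i \neq j$; (c') if $A_i \cap B_i = A_j \cap B_j$ for some $i \neq j$, then it is not the case that $A_i \cap B_j = A_i \cap B_i = A_j \cap B_i$. Then $$\sum_{i \in I} \binom{|A_i \cup B_i|}{|A_i \setminus B_i|}^{-1} \binom{|B_i|}{|A_i \cap B_i|}^{-1} \leq 1.$$ *)

From mathcomp Require Import all_boot all_order all_algebra.
Set Implicit Arguments.
Unset Strict Implicit.
Unset Printing Implicit Defensive.

From mathcomp Require Import all_boot all_order all_algebra.
From mathcomp Require Import ring.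
Import Order.TTheory GRing.Theory Num.Theory.

(* An ordering of the ground set is compatible with (A, B) when each element
   of A precedes each element of B, pairs inside A :&: B excepted.  A uniformly
   random ordering is compatible with (A_i, B_i) with probability
   a! c! d! / (a + c + d)! for a = |A_i :\: B_i|, c = |A_i :&: B_i|,
   d = |B_i :\: A_i|, which is the i-th summand.  These events are disjoint:
   if an ordering is compatible with (A_i, B_i) and (A_j, B_j), then for
   y in A_i :&: B_j and z in A_j :&: B_i the pair (A_i, B_i) cannot force y
   before z while (A_j, B_j) forces z before y, so {y, z} lies in A_i :&: B_i
   or in A_j :&: B_j; with (a), (b) this forces A_i :&: B_i,
   A_i :&: B_j, A_j :&: B_i, A_j :&: B_j to coincide, which (c') forbids.
   Instead of counting permutations, the probabilities are computed by
   conditioning on the last element of the ordering. *)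

Lemma subset_card_bound_eq {T : finType} {n : nat} {A B : {set T}} :
  A \subset B -> #|B| <= n -> n <= #|A| -> A = B.
Proof. by move=> AB cB cA; apply/eqP; rewrite eqEcard AB (leq_trans cB cA). Qed.

Section Crossing.
Context {T : finType} {t : nat} {X Y : {set T}}.
Hypotheses (t_gt0 : 0 < t) (cardX : #|X| <= t) (cardY : #|Y| <= t).

Lemma crossing_notin {P Q : {set T}} {p0 : T} :
  t <= #|P| -> t <= #|Q| ->
  (forall p q, p \in P -> q \in Q -> (p \in X) && (q \in X) || (p \in Y) && (q \in Y)) ->
  p0 \in P -> p0 \notin X -> P = Y /\ Q = Y.
Proof.
move=> cardP cardQ cross p0P p0X.
have QY : Q = Y.
  apply: subset_card_bound_eq cardY cardQ; apply/subsetP => q qQ.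
  by have := cross _ _ p0P qQ; rewrite (negbTE p0X) => /andP[].
split=> //; apply: subset_card_bound_eq cardY cardP; apply/subsetP => p pP.
apply/negPn/negP => pY.
have QX : Q = X.
  apply: subset_card_bound_eq cardX cardQ; apply/subsetP => q qQ.
  by have := cross _ _ pP qQ; rewrite (negbTE pY) orbF => /andP[].
have /set0Pn[q qQ] : Q != set0 by rewrite -card_gt0 (leq_trans t_gt0).
by have := cross _ _ pP qQ; rewrite (negbTE pY) orbF -QX QY (negbTE pY).
Qed.

Lemma crossing_eq {P Q : {set T}} :
  t <= #|P| -> t <= #|Q| ->
  (forall p q, p \in P -> q \in Q -> (p \in X) && (q \in X) || (p \in Y) && (q \in Y)) ->
  P = Q.
Proof.
move=> cardP cardQ cross.
have crossC q p : q \in Q -> p \in P -> (q \in X) && (p \in X) || (q \in Y) && (p \in Y).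
  by move=> qQ pP; rewrite andbC [(q \in Y) && _]andbC; apply: cross.
have [PX | /subsetPn[p pP pX]] := boolP (P \subset X); last first.
  by have [-> ->] := crossing_notin cardP cardQ cross pP pX.
have [QX | /subsetPn[q qQ qX]] := boolP (Q \subset X); last first.
  by have [-> ->] := crossing_notin cardQ cardP crossC qQ qX.
by rewrite (subset_card_bound_eq PX cardX cardP) (subset_card_bound_eq QX cardX cardQ).
Qed.

End Crossing.

Section Compatible.
Context {T : finType}.
Implicit Types (A B : {set T}) (s : seq T) (x y z : T).

Definition forced_before A B y z : bool :=
  [&& y \in A, z \in B & (y \notin B) || (z \notin A)].

Definition compatible A B s :=
  forall y z, y \in s -> z \in s -> forced_before A B y z -> index y s < index z s.

Lemma compatible_cross s Ai Bi Aj Bj y z :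
  compatible Ai Bi s -> compatible Aj Bj s -> y \in s -> z \in s ->
  y \in Ai :&: Bj -> z \in Aj :&: Bi ->
  (y \in Ai :&: Bi) && (z \in Ai :&: Bi) || (y \in Aj :&: Bj) && (z \in Aj :&: Bj).
Proof.
move=> ci cj ys zs; rewrite !inE => /andP[yAi yBj] /andP[zAj zBi].
rewrite yAi yBj zAj zBi /= !andbT; apply/negPn/negP => /norP[].
rewrite !negb_and => yz_i yz_j.
have fi : forced_before Ai Bi y z by rewrite /forced_before yAi zBi.
have fj : forced_before Aj Bj z y by rewrite /forced_before zAj yBj orbC.
by have := ltn_trans (ci y z ys zs fi) (cj z y zs ys fj); rewrite ltnn.
Qed.

Lemma compatible_pairs_eq {t : nat} {s Ai Bi Aj Bj} :
  (forall x, x \in s) -> 0 < t ->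
  #|Ai :&: Bi| <= t -> #|Aj :&: Bj| <= t ->
  t <= #|Ai :&: Bj| -> t <= #|Aj :&: Bi| ->
  compatible Ai Bi s -> compatible Aj Bj s ->
  [/\ Ai :&: Bi = Aj :&: Bj, Ai :&: Bj = Ai :&: Bi & Ai :&: Bi = Aj :&: Bi].
Proof.
move=> s_full t_gt0 cardXi cardXj cardP cardQ ci cj.
have PQ : Ai :&: Bj = Aj :&: Bi.
  apply: (crossing_eq t_gt0 cardXi cardXj cardP cardQ) => y z yP zQ.
  exact: compatible_cross ci cj (s_full y) (s_full z) yP zQ.
have PXi : Ai :&: Bj = Ai :&: Bi.
  apply: subset_card_bound_eq cardXi cardP.
  by rewrite subsetI subsetIl PQ subsetIr.
have PXj : Ai :&: Bj = Aj :&: Bj.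
  apply: subset_card_bound_eq cardXj cardP.
  by rewrite subsetI subsetIr andbT PQ subsetIl.
by split; rewrite -?PQ -?PXi -?PXj.
Qed.

End Compatible.

Section Weight.
Local Open Scope ring_scope.

Lemma natr_fact_neq0 n : n`!%:R != 0 :> rat.
Proof. by rewrite pnatr_eq0 -lt0n fact_gt0. Qed.

Definition weight (a c d : nat) : rat := (a`! * c`! * d`!)%:R / (a + c + d)`!%:R.

Lemma weightC23 a c d : weight a c d = weight a d c.
Proof. by rewrite /weight mulnAC addnAC. Qed.

Lemma weight_a00 a : weight a 0 0 = 1.
Proof. by rewrite /weight !muln1 !addn0 divff ?natr_fact_neq0. Qed.

Lemma weightS a c d : (a + c + d.+1)%N%:R * weight a c d.+1 = d.+1%:R * weight a c d.
Proof.
rewrite /weight addnS !factS !natrM; field.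
by rewrite natr_fact_neq0 -!natrD nat1r pnatr_eq0.
Qed.

Lemma weightS_mid a c : (a + c.+1)%N%:R * weight a c.+1 0 = c.+1%:R * weight a c 0.
Proof. by rewrite (weightC23 a c.+1) (weightC23 a c) -weightS addn0. Qed.

Lemma weight_total n a c d :
  (n + (a + c + d))%N%:R * weight a c d =
  n%:R * weight a c d + d%:R * weight a c d.-1 +
  c%:R * ((d == 0%N)%:R * weight a c.-1 d) +
  a%:R * (((c + d)%N == 0%N)%:R * weight a.-1 c d).
Proof.
rewrite natrD mulrDl; case: d => [|d]; last first.
  by rewrite weightS addnS /= !mul0r !mulr0 !addr0.
case: c => [|c]; last first.
  by rewrite addn0 weightS_mid /= !mul0r !mulr0 mul1r !addr0.
by rewrite !addn0 !weight_a00 /= !mul0r !mul1r !addr0.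
Qed.

End Weight.

Section RandomOrdering.
Context {T : finType}.
Implicit Types (A B U S : {set T}) (s : seq T) (x : T).
Local Open Scope ring_scope.

(* The probability that a random ordering of U is compatible with (A, B). *)
Definition pair_weight A B U : rat :=
  weight #|U :&: (A :\: B)| #|U :&: (A :&: B)| #|U :&: (B :\: A)|.

(* No element of U is forced after x, so x can end a compatible ordering of U. *)
Definition may_be_last A B U x : bool :=
  if x \in A then
    if x \in B then #|U :&: (B :\: A)| == 0%N
    else (#|U :&: (A :&: B)| + #|U :&: (B :\: A)| == 0)%N
  else true.

Lemma compatible_rcons A B U s x :
  compatible A B s -> x \notin s -> {subset s <= U} -> may_be_last A B U x ->
  compatible A B (rcons s x).
Proof.
move=> cs xs sU last_x y z; rewrite -!cats1 !mem_cat !inE.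
have index_x : index x (s ++ [:: x]) = size s.
  by rewrite index_cat (negbTE xs) /= eqxx addn0.
have notin_U S : #|U :&: S| = 0%N -> z \in s -> z \notin S.
  move=> /eqP; rewrite cards_eq0 => /eqP US0 zs.
  by apply: contra_eqN US0 => zS; apply/set0Pn; exists z; rewrite inE sU.
move=> /orP[ys|/eqP->] /orP[zs|/eqP->].
- by rewrite !index_cat ys zs; exact: cs.
- by rewrite index_x index_cat ys index_mem.
- move: last_x; rewrite /may_be_last /forced_before.
  case: ifP => //= xA; case: ifP => xB /=.
    move=> /eqP/notin_U/(_ zs); rewrite !inE => /negP zBA /andP[zB zA].
    by case: zBA; rewrite zB zA.
  rewrite addn_eq0 => /andP[/eqP/notin_U/(_ zs) zAB /eqP/notin_U/(_ zs) zBA].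
  by move: zAB zBA; rewrite !inE andbT; case: (z \in A); case: (z \in B).
- by rewrite /forced_before; case: (x \in A); case: (x \in B).
Qed.

Lemma card_setD1I U S x : x \in U -> #|(U :\ x) :&: S| = (#|U :&: S| - (x \in S))%N.
Proof. by move=> xU; rewrite setIDAC (cardsD1 x (U :&: S)) inE xU addKn. Qed.

Lemma sum_mem_card U S : (\sum_(x in U) (x \in S))%N = #|U :&: S|.
Proof.
rewrite -sum1_card big_mkcond [RHS]big_mkcond /=.
by apply: eq_bigr => x _; rewrite !inE; case: (x \in U); case: (x \in S).
Qed.

Lemma sum_mem_mul U S (k : rat) : \sum_(x in U) ((x \in S)%:R * k) = #|U :&: S|%:R * k.
Proof. by rewrite -big_distrl /= -natr_sum sum_mem_card. Qed.

Lemma card_setI_regions A B U :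
  #|U| = (#|U :&: ~: (A :|: B)| +
          (#|U :&: (A :\: B)| + #|U :&: (A :&: B)| + #|U :&: (B :\: A)|))%N.
Proof.
rewrite -!sum_mem_card -sum1_card -!big_split /=.
by apply: eq_bigr => x _; rewrite !inE; case: (x \in A); case: (x \in B).
Qed.

Lemma pair_weight_rec A B U : #|U|%:R * pair_weight A B U =
  \sum_(x in U) (if may_be_last A B U x then pair_weight A B (U :\ x) else 0).
Proof.
set a := #|U :&: (A :\: B)|; set c := #|U :&: (A :&: B)|; set d := #|U :&: (B :\: A)|.
have by_region x : x \in U ->
  (if may_be_last A B U x then pair_weight A B (U :\ x) else 0) =
  (x \in ~: (A :|: B))%:R * weight a c d + (x \in B :\: A)%:R * weight a c d.-1 +
  (x \in A :&: B)%:R * ((d == 0%N)%:R * weight a c.-1 d) +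
  (x \in A :\: B)%:R * (((c + d)%N == 0%N)%:R * weight a.-1 c d).
  move=> xU; rewrite /may_be_last /pair_weight !(card_setD1I U _ x xU) -/a -/c -/d !inE.
  case: (x \in A); case: (x \in B) => /=; rewrite ?subn0 ?subn1 ?mul0r ?mul1r ?add0r ?addr0 //;
    by case: eqP; rewrite ?mul0r ?mul1r.
rewrite (eq_bigr _ by_region) !big_split /= !sum_mem_mul (card_setI_regions A B U).
exact: weight_total.
Qed.

End RandomOrdering.

Section DisjointEvents.
Variables (T I : finType) (A B : I -> {set T}).
Local Open Scope ring_scope.

Lemma sum_pair_weight_le1 (J : {set I}) (U : {set T}) :
  (forall s, uniq s -> s =i U ->
     {in J &, forall i j, compatible (A i) (B i) s -> compatible (A j) (B j) s -> i = j}) ->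
  \sum_(i in J) pair_weight (A i) (B i) U <= 1.
Proof.
move cardU: #|U| => n; elim: n J U cardU => [|n IH] J U cardU unique_pair.
  have U0 : U = set0 by apply/eqP; rewrite -cards_eq0 cardU.
  have J_le1 : (#|J| <= 1)%N.
    apply/card_le1_eqP => i j iJ jJ; apply: (unique_pair [::]) => //.
    by move=> y; rewrite U0 inE.
  rewrite (eq_bigr (fun=> 1)) => [|i _]; last by rewrite /pair_weight U0 !set0I !cards0 weight_a00.
  by rewrite sumr_const (ler_nat _ _ 1).
rewrite -(ler_pM2l (x := #|U|%:R)) ?mulr1 ?mulr_sumr; last by rewrite ltr0n cardU.
rewrite (eq_bigr _ (fun i _ => pair_weight_rec (A i) (B i) U)) exchange_big /=.
rewrite -sumr_const; apply: ler_sum => x xU; rewrite -big_mkcondr /=.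
rewrite (eq_bigl (fun i => i \in [set i in J | may_be_last (A i) (B i) U x])); last first.
  by move=> i; rewrite inE.
apply: IH => [|s uniq_s sU i j]; first by move: cardU; rewrite (cardsD1 x U) xU add1n => -[].
rewrite !inE => /andP[iJ last_i] /andP[jJ last_j] ci cj.
have xs : x \notin s by rewrite sU !inE eqxx.
have s_sub : {subset s <= U} by move=> z; rewrite sU inE => /andP[].
apply: (unique_pair (rcons s x)) => //.
- by rewrite rcons_uniq xs.
- by move=> y; rewrite mem_rcons inE sU !inE; case: eqVneq => [->|].
- exact: compatible_rcons ci xs s_sub last_i.
- exact: compatible_rcons cj xs s_sub last_j.
Qed.

End DisjointEvents.

Section Binomial.
Local Open Scope ring_scope.

Lemma binomial_weight (T : finType) (X Y : {set T}) :
  ('C(#|X :|: Y|, #|X :\: Y|)%:R)^-1 * ('C(#|Y|, #|X :&: Y|)%:R)^-1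
  = pair_weight X Y setT.
Proof.
rewrite /pair_weight /weight !setTI.
set a := #|X :\: Y|; set c := #|X :&: Y|; set d := #|Y :\: X|.
have cardY : #|Y| = (c + d)%N by rewrite -(cardsID X Y) setIC.
have cardXY : #|X :|: Y| = (a + (c + d))%N.
  by rewrite -(cardsID Y (X :|: Y)) [(X :|: Y) :&: Y]setIC setKU setDUl setDv setU0 cardY addnC.
have binC (m k : nat) : 'C(k + m, k)%:R = (k + m)`!%:R / (k`! * m`!)%:R :> rat.
  by rewrite -(bin_fact (leq_addr m k)) addKn natrM mulfK // natrM mulf_neq0 ?natr_fact_neq0.
rewrite cardXY cardY !binC !invf_div addnA !natrM.
by field; rewrite !natr_fact_neq0.
Qed.

End Binomial.

Theorem theorem1p9 (T I : finType) (t : nat) (A B : I -> {set T}) :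
  (1 <= t)%N ->
  (forall i, (#|A i :&: B i| <= t)%N) ->
  (forall i j, i != j -> (t <= #|A i :&: B j|)%N) ->
  (forall i j, i != j -> A i :&: B i = A j :&: B j ->
     ~ (A i :&: B j = A i :&: B i /\ A i :&: B i = A j :&: B i)) ->
  (\sum_(i : I) (('C(#|A i :|: B i|, #|A i :\: B i|))%:R)^-1
                * (('C(#|B i|, #|A i :&: B i|))%:R)^-1 <= 1 :> rat)%R.
Proof.
move=> t_gt0 cap_le cross_ge not_config.
under eq_bigr do rewrite binomial_weight.
rewrite -big_set /=; apply: sum_pair_weight_le1 => s _ s_full i j _ _ ci cj.
have s_all x : x \in s by rewrite s_full inE.
case: (eqVneq i j) => // ij; have ji : j != i by rewrite eq_sym.
have [Xij Pij Pji] := compatible_pairs_eq s_all t_gt0 (cap_le i) (cap_le j)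
  (cross_ge i j ij) (cross_ge j i ji) ci cj.
by case: (not_config i j ij Xij).
Qed.
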